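(* Let $0\le\alpha\le\beta\le\pi/2$ and $P_1,P_2>0$, and define $\mathcal R(\theta)$ as in the context. Then for every $\theta\in\mathbb R$ there exists $\theta'\in[\alpha,\beta]$ with $\mathcal R(\theta)\subseteq\mathcal R(\theta')$. In particular, for a two-hop MAC with two relay nodes, to obtain the first outer bound it suffices to take $\theta\in[\alpha,\beta]$.
   Context: Let $\mathcal C(x)=\frac12\log_2(1+x)$, $\phi_1(\theta)=P_1\cos^2(\theta-\alpha)$, $\phi_2(\theta)=P_2\cos^2(\theta-\beta)$, $\phi=\phi_1+\phi_2$, and $\mathcal R(\theta)=\{(R_1,R_2)\ge0:R_1\le\mathcal C(\phi_1(\theta)),R_2\le\mathcal C(\phi_2(\theta)),R_1+R_2\le\mathcal C(\phi(\theta))\}$. In a two-user two-hop MAC with two relays (source-to-relay channel vectors $\mathbf h_{01},\mathbf h_{02}\in\mathbb R^2$ with positive entries, source powers $P_{S_i}$, relay gains $\mathbf B$, relay-to-destination vector $\mathbf h_1$), writing $\mathbf h_{0i}/\|\mathbf h_{0i}\|$ and $\mathbf B\mathbf h_1/\|\mathbf B\mathbf h_1\|$ as $(\cos\alpha,\sin\alpha)$, $(\cos\beta,\sin\beta)$, $(\cos\theta,\sin\theta)$ and $P_i=\|\mathbf h_{0i}\|^2P_{S_i}$, the first outer-bound rate set (destination noise omitted) of the AF scheme $\mathbf B$ equals $\mathcal R(\theta)$. *)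

From Stdlib Require Import Reals.
Open Scope R_scope.

Definition Cap (x : R) : R := / 2 * (ln (1 + x) / ln 2).

Definition phi1 (P1 alpha theta : R) : R := P1 * (cos (theta - alpha)) ^ 2.
Definition phi2 (P2 beta theta : R) : R := P2 * (cos (theta - beta)) ^ 2.

Definition region (P1 P2 alpha beta theta : R) (R1 R2 : R) : Prop :=
  0 <= R1 /\ 0 <= R2 /\
  R1 <= Cap (phi1 P1 alpha theta) /\
  R2 <= Cap (phi2 P2 beta theta) /\
  R1 + R2 <= Cap (phi1 P1 alpha theta + phi2 P2 beta theta).

(* The two constraints that grow with θ are cos²(θ - α) and cos²(θ - β), both
   π-periodic in θ, and the three rate bounds are monotone in them.  So it
   suffices to find, for θ reduced to [α, α + π), an angle θ' ∈ [α, β] at which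
   both cosines are at least as large.  Since β - α ≤ π/2 this is a case split:
   θ' = θ on [α, β], θ' = β up to α + π/2, the reflection α + β + π/2 - θ up to
   β + π/2, and θ' = α beyond. *)

From Stdlib Require Import Reals Lra ZArith Rtrigo_facts.
Open Scope R_scope.

Lemma Cap_le_compat x y : 0 <= x -> x <= y -> Cap x <= Cap y.
Proof.
  intros Hx Hxy; unfold Cap, Rdiv.
  assert (Hln2 : 0 < ln 2) by (rewrite <- ln_1; apply ln_increasing; lra).
  assert (Hln : ln (1 + x) <= ln (1 + y)).
  { destruct (Req_dec x y) as [-> | Hne]; [lra |].
    left; apply ln_increasing; lra. }
  apply Rmult_le_compat_l; [lra |].
  apply Rmult_le_compat_r; [left; apply Rinv_0_lt_compat |]; lra.
Qed.

Lemma region_incl P1 P2 alpha beta theta theta' :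
  0 <= P1 -> 0 <= P2 ->
  cos (theta - alpha) ^ 2 <= cos (theta' - alpha) ^ 2 ->
  cos (theta - beta) ^ 2 <= cos (theta' - beta) ^ 2 ->
  forall R1 R2, region P1 P2 alpha beta theta R1 R2 ->
    region P1 P2 alpha beta theta' R1 R2.
Proof.
  intros HP1 HP2 Ha Hb R1 R2 (H1 & H2 & C1 & C2 & C12).
  unfold region, phi1, phi2 in *.
  assert (G1 : 0 <= P1 * cos (theta - alpha) ^ 2)
    by (apply Rmult_le_pos; [| apply pow2_ge_0]; lra).
  assert (G2 : 0 <= P2 * cos (theta - beta) ^ 2)
    by (apply Rmult_le_pos; [| apply pow2_ge_0]; lra).
  assert (F1 : P1 * cos (theta - alpha) ^ 2 <= P1 * cos (theta' - alpha) ^ 2)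
    by (apply Rmult_le_compat_l; lra).
  assert (F2 : P2 * cos (theta - beta) ^ 2 <= P2 * cos (theta' - beta) ^ 2)
    by (apply Rmult_le_compat_l; lra).
  repeat split; try lra.
  - apply (Rle_trans _ _ _ C1); apply Cap_le_compat; lra.
  - apply (Rle_trans _ _ _ C2); apply Cap_le_compat; lra.
  - apply (Rle_trans _ _ _ C12); apply Cap_le_compat; lra.
Qed.

Lemma cos_sqr_add_IZR_PI (k : Z) x : cos (x + IZR k * PI) ^ 2 = cos x ^ 2.
Proof.
  induction k as [| k IH | k IH] using Z.peano_ind.
  - now rewrite Rmult_0_l, Rplus_0_r.
  - rewrite succ_IZR, <- IH.
    replace (x + (IZR k + 1) * PI) with (x + IZR k * PI + PI) by ring.
    rewrite neg_cos; ring.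
  - rewrite <- IH; unfold Z.pred; rewrite plus_IZR.
    replace (x + IZR k * PI) with (x + (IZR k + -1) * PI + PI) by ring.
    rewrite neg_cos; ring.
Qed.

Lemma cos_sqr_PI_minus x : cos (PI - x) ^ 2 = cos x ^ 2.
Proof. rewrite cos_pi_minus; ring. Qed.

Lemma cos_sqr_le_1 x : cos x ^ 2 <= 1.
Proof. pose proof (COS_bound x); nra. Qed.

Lemma cos_sqr_antitone x y :
  0 <= x -> x <= y -> y <= PI / 2 -> cos y ^ 2 <= cos x ^ 2.
Proof.
  intros Hx Hxy Hy.
  pose proof PI_RGT_0.
  assert (Hcy : 0 <= cos y) by (apply cos_ge_0; lra).
  assert (Hc : cos y <= cos x) by (apply cos_decr_1; lra).
  nra.
Qed.

Lemma exists_shift_into_period p a x :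
  0 < p -> exists k : Z, a <= x - IZR k * p < a + p.
Proof.
  intros Hp; exists (Zfloor ((x - a) / p)).
  destruct (Zfloor_bound ((x - a) / p)) as [Hlo Hhi].
  set (k := IZR (Zfloor ((x - a) / p))) in *.
  assert (Hq : (x - a) / p * p = x - a) by (field; lra).
  split; nra.
Qed.

Lemma exists_dominating_angle alpha beta d :
  alpha <= beta -> beta - alpha <= PI / 2 -> alpha <= d < alpha + PI ->
  exists t, alpha <= t <= beta /\
    cos (d - alpha) ^ 2 <= cos (t - alpha) ^ 2 /\
    cos (d - beta) ^ 2 <= cos (t - beta) ^ 2.
Proof.
  intros Hab Hgap [Hd1 Hd2].
  pose proof PI_RGT_0.
  destruct (Rle_dec d beta) as [Hd | Hd].
  { exists d; lra. }
  destruct (Rlt_dec d (alpha + PI / 2)) as [Hd' | Hd'].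
  { exists beta; repeat split; try lra.
    - apply cos_sqr_antitone; lra.
    - rewrite Rminus_diag, cos_0; pose proof (cos_sqr_le_1 (d - beta)); lra. }
  destruct (Rle_dec d (beta + PI / 2)) as [Hd'' | Hd''].
  { exists (alpha + beta + PI / 2 - d); repeat split; try lra.
    - rewrite <- cos_sqr_PI_minus.
      replace (alpha + beta + PI / 2 - d - alpha) with (beta + PI / 2 - d) by ring.
      apply cos_sqr_antitone; lra.
    - replace (alpha + beta + PI / 2 - d - beta) with (- (d - alpha - PI / 2))
        by ring.
      rewrite cos_neg; apply cos_sqr_antitone; lra. }
  exists alpha; repeat split; try lra.
  - rewrite Rminus_diag, cos_0; pose proof (cos_sqr_le_1 (d - alpha)); lra.
  - rewrite <- cos_sqr_PI_minus.
    replace (alpha - beta) with (- (beta - alpha)) by ring.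
    rewrite cos_neg; apply cos_sqr_antitone; lra.
Qed.

Theorem lemma3 (alpha beta P1 P2 : R)
  (Ha : 0 <= alpha) (Hab : alpha <= beta) (Hb : beta <= PI / 2)
  (HP1 : 0 < P1) (HP2 : 0 < P2) :
  forall theta : R, exists theta' : R,
    alpha <= theta' <= beta /\
    forall R1 R2 : R,
      region P1 P2 alpha beta theta R1 R2 ->
      region P1 P2 alpha beta theta' R1 R2.
Proof.
  intros theta.
  destruct (exists_shift_into_period PI alpha theta PI_RGT_0) as [k Hd].
  destruct (exists_dominating_angle alpha beta (theta - IZR k * PI))
    as (t & Ht & H1 & H2); [lra | lra | exact Hd |].
  assert (Hshift : forall c, cos (theta - IZR k * PI - c) ^ 2 = cos (theta - c) ^ 2).
  { intros c; rewrite <- (cos_sqr_add_IZR_PI k (theta - IZR k * PI - c)).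
    f_equal; f_equal; ring. }
  rewrite !Hshift in *.
  exists t; split; [exact Ht |].
  apply region_incl; lra.
Qed.
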